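(* Let $c\ge 0$ be a real number, $q$ a positive integer, and $(e_n)_{n\ge q}$ a sequence of real numbers such that $$e_n\le c+\frac1n\sum_{u=q}^{n-1}e_u\quad\text{for all } n\ge q.$$ Then $e_n\le c\log(en/q)$ for all $n\ge q$ (here $e$ inside the logarithm is Euler's number). *)

From Stdlib Require Import Reals List.
Open Scope R_scope.

(* sum_range f a b = f a + f (a+1) + ... + f (b-1)  (empty if b <= a) *)
Definition sum_range (f : nat -> R) (a b : nat) : R :=
  fold_right Rplus 0 (map f (seq a (b - a))).

(* A sequence satisfying the averaged recursion is dominated by any
   supersolution b of it, i.e. any b with c + (1/n) sum_{u=q}^{n-1} b u <= b n,
   by strong induction on n.  The function b n = c ln(e n / q) is such a
   supersolution: its partial sums are at most c n ln(n/q), because adding the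
   term 1 + ln(n/q) costs at most (n+1) ln((n+1)/q) - n ln(n/q), which is the
   inequality (n+1) (ln (n+1) - ln n) >= 1, a form of ln x <= x - 1. *)

From Stdlib Require Import Reals List Lra Lia Wf_nat.
Open Scope R_scope.

Lemma sum_range_empty (f : nat -> R) (a : nat) : sum_range f a a = 0.
Proof. unfold sum_range. now rewrite Nat.sub_diag. Qed.

Lemma sum_range_S (f : nat -> R) (a b : nat) : (a <= b)%nat ->
  sum_range f a (S b) = sum_range f a b + f b.
Proof.
  intros hab. unfold sum_range.
  replace (S b - a)%nat with (S (b - a)) by lia.
  rewrite seq_S, map_app, fold_right_app. simpl.
  replace (a + (b - a))%nat with b by lia.
  induction (map f (seq a (b - a))) as [|x l IH]; simpl; [ring | rewrite IH; ring].
Qed.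

Lemma sum_range_scal_l (k : R) (f : nat -> R) (a b : nat) :
  sum_range (fun u => k * f u) a b = k * sum_range f a b.
Proof.
  unfold sum_range.
  induction (seq a (b - a)) as [|u l IH]; simpl; [ring | rewrite IH; ring].
Qed.

Lemma sum_range_le (f g : nat -> R) (a b : nat) :
  (forall u, (a <= u < b)%nat -> f u <= g u) ->
  sum_range f a b <= sum_range g a b.
Proof.
  intros hfg. unfold sum_range.
  assert (hl : forall u, In u (seq a (b - a)) -> f u <= g u).
  { intros u hu. apply in_seq in hu. apply hfg. lia. }
  induction (seq a (b - a)) as [|u l IH]; simpl; [lra |].
  assert (f u <= g u) by (apply hl; now left).
  assert (fold_right Rplus 0 (map f l) <= fold_right Rplus 0 (map g l))
    by (apply IH; intros v hv; apply hl; now right).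
  lra.
Qed.

Lemma ln_le_sub_1 (x : R) : 0 < x -> ln x <= x - 1.
Proof.
  intros hx. pose proof (exp_ineq1_le (ln x)) as h.
  rewrite exp_ln in h by exact hx. lra.
Qed.

Lemma sub_le_mul_ln_sub (x y : R) : 0 < x -> 0 < y ->
  y - x <= y * (ln y - ln x).
Proof.
  intros hx hy.
  assert (hratio : ln (x * / y) = ln x - ln y).
  { rewrite ln_mult, ln_Rinv; try apply Rinv_0_lt_compat; lra. }
  assert (hle : ln (x * / y) <= x * / y - 1)
    by (apply ln_le_sub_1, Rmult_lt_0_compat; try apply Rinv_0_lt_compat; lra).
  rewrite hratio in hle.
  apply Rmult_le_compat_l with (r := y) in hle; [| lra].
  replace (y * (x * / y - 1)) with (x - y) in hle by (field; lra).
  lra.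
Qed.

Lemma ln_exp_1_mul_div (x y : R) : 0 < x -> 0 < y ->
  ln (exp 1 * x / y) = 1 + ln x - ln y.
Proof.
  intros hx hy. pose proof (exp_pos 1).
  unfold Rdiv. rewrite ln_mult, ln_mult, ln_exp, ln_Rinv;
    try apply Rinv_0_lt_compat; try apply Rmult_lt_0_compat; lra.
Qed.

Lemma sum_range_ln_le (q n : nat) : (0 < q)%nat -> (q <= n)%nat ->
  sum_range (fun u => ln (exp 1 * INR u / INR q)) q n
  <= INR n * (ln (INR n) - ln (INR q)).
Proof.
  intros hq hn. assert (hq' : 0 < INR q) by (apply lt_0_INR; lia).
  induction hn as [|n hn IH].
  - rewrite sum_range_empty. lra.
  - assert (hpos : 0 < INR n) by (apply lt_0_INR; lia).
    rewrite sum_range_S, ln_exp_1_mul_div by (auto || lra).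
    pose proof (sub_le_mul_ln_sub (INR n) (INR (S n)) hpos
                  ltac:(apply lt_0_INR; lia)) as hgap.
    rewrite S_INR in *. lra.
Qed.

Lemma le_supersolution_of_averaged (c : R) (q : nat) (e b : nat -> R) :
  (0 < q)%nat ->
  (forall n, (q <= n)%nat -> e n <= c + / INR n * sum_range e q n) ->
  (forall n, (q <= n)%nat -> c + / INR n * sum_range b q n <= b n) ->
  forall n, (q <= n)%nat -> e n <= b n.
Proof.
  intros hq he hb n. induction n as [n IH] using lt_wf_ind. intros hn.
  assert (hsum : sum_range e q n <= sum_range b q n)
    by (apply sum_range_le; intros u hu; apply IH; lia).
  assert (hinv : 0 < / INR n) by (apply Rinv_0_lt_compat, lt_0_INR; lia).
  apply Rmult_le_compat_l with (r := / INR n) in hsum; [| lra].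
  specialize (he n hn). specialize (hb n hn). lra.
Qed.

Lemma ln_supersolution (c : R) (q n : nat) : 0 <= c -> (0 < q)%nat -> (q <= n)%nat ->
  c + / INR n * sum_range (fun u => c * ln (exp 1 * INR u / INR q)) q n
  <= c * ln (exp 1 * INR n / INR q).
Proof.
  intros hc hq hn.
  assert (hq' : 0 < INR q) by (apply lt_0_INR; lia).
  assert (hn' : 0 < INR n) by (apply lt_0_INR; lia).
  rewrite sum_range_scal_l, ln_exp_1_mul_div by lra.
  pose proof (sum_range_ln_le q n hq hn) as hsum.
  assert (hcn : 0 <= c / INR n)
    by (unfold Rdiv; apply Rmult_le_pos; [lra | left; apply Rinv_0_lt_compat; lra]).
  apply Rmult_le_compat_l with (r := c / INR n) in hsum; [| exact hcn].
  replace (c / INR n * (INR n * (ln (INR n) - ln (INR q))))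
    with (c * (ln (INR n) - ln (INR q))) in hsum by (field; lra).
  replace (/ INR n * (c * sum_range (fun u => ln (exp 1 * INR u / INR q)) q n))
    with (c / INR n * sum_range (fun u => ln (exp 1 * INR u / INR q)) q n)
    by (field; lra).
  lra.
Qed.

Theorem lemma2p1 (c : R) (q : nat) (e : nat -> R)
  (hc : 0 <= c) (hq : (0 < q)%nat)
  (he : forall n : nat, (q <= n)%nat ->
          e n <= c + / INR n * sum_range e q n) :
  forall n : nat, (q <= n)%nat -> e n <= c * ln (exp 1 * INR n / INR q).
Proof.
  apply (le_supersolution_of_averaged c q e _ hq he).
  intros n hn. exact (ln_supersolution c q n hc hq hn).
Qed.
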